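(* Let $\nu\ge3$ be a square-free integer with $\nu\equiv2$ or $3\pmod 4$. Define $x_0=0$ and $x_{n+1}=\sqrt{\nu+x_n}$. Let $n\ge1$ and let $p$ be a prime divisor of $\nu$. For any maximal ideal $\mathcal{P}\subseteq\mathbb{Z}[x_n]$ with $\mathcal{P}\cap\mathbb{Z}=p\mathbb{Z}$, the localization of $\mathbb{Z}[x_n]$ at $\mathcal{P}$ is a discrete valuation ring.
   Context: Square roots are the positive real ones. *)

(* the ambient field is algC (algebraic complex numbers);
   Z[x_n] is realised as a subring of algC. *)
From HB Require Import structures.
From mathcomp Require Import all_boot all_order all_algebra all_field.
Set Implicit Arguments. Unset Strict Implicit. Unset Printing Implicit Defensive.
Import Order.TTheory GRing.Theory Num.Theory.
Local Open Scope ring_scope.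

Definition squarefree (nu : nat) : Prop :=
  forall q : nat, prime q -> ~ (q * q %| nu)%N.

Fixpoint xseq (nu : nat) (n : nat) : algC :=
  match n with
  | 0 => 0
  | n'.+1 => sqrtC (nu%:R + xseq nu n')
  end.

Definition Zadj (a : algC) (y : algC) : Prop :=
  exists q : {poly int}, y = (map_poly (fun z : int => z%:~R) q).[a].

Definition is_ideal (A I : algC -> Prop) : Prop :=
  [/\ forall x, I x -> A x,
      I 0,
      forall x y, I x -> I y -> I (x - y)
    & forall r x, A r -> I x -> I (r * x)].

Definition is_maximal_ideal (A P : algC -> Prop) : Prop :=
  [/\ is_ideal A P,
      (exists a, A a /\ ~ P a)
    & forall J, is_ideal A J -> (forall x, P x -> J x) ->
        (forall x, J x <-> P x) \/ (forall x, J x <-> A x)].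

(* The localization A_P of the domain A at the prime ideal P, realised inside
   the fraction field (a subfield of algC): { a / b : a, b in A, b not in P } *)
Definition localization (A P : algC -> Prop) (y : algC) : Prop :=
  exists a b, [/\ A a, A b, ~ P b & y = a / b].

(* Discrete valuation ring: a local principal ideal domain that is not a field
   (S is a subring of the field algC, hence an integral domain). *)
Definition is_DVR (S : algC -> Prop) : Prop :=
  [/\
      forall I, is_ideal S I ->
        exists g, S g /\ (forall x, I x <-> exists s, S s /\ x = s * g),
      (exists M, is_maximal_ideal S M /\
         forall M', is_maximal_ideal S M' -> forall x, M' x <-> M x)
    &
      exists s, [/\ S s, s != 0 & ~ S s^-1]].

(* x_n is a root of F_n, where F_0 = X and F_(k+1) = F_k(X^2 - nu).  If p | nu then
   p^2 does not divide nu, so F_1 = X^2 - nu is p-Eisenstein, and composing a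
   p-Eisenstein polynomial of degree at least 2 with X^2 - nu keeps it p-Eisenstein.
   Writing F_n = X^N + p g with p not dividing g(0), we get x^N = -p g(x) with g(x)
   outside P, so x lies in P and p is x^N times a unit of the localization.
   Reducing modulo F_n and splitting off the lowest coefficient not divisible by p
   shows that every nonzero element of Z[x]_P is x^k times a unit; hence x is a
   uniformizer and Z[x]_P is a discrete valuation ring. *)

From HB Require Import structures.
From mathcomp Require Import all_boot all_order all_algebra all_field.
From mathcomp Require Import ring.
From Stdlib Require Import Classical_Prop Wf_nat.

Set Implicit Arguments.
Unset Strict Implicit.
Unset Printing Implicit Defensive.
Import Order.TTheory GRing.Theory Num.Theory.
Local Open Scope ring_scope.

Definition is_subring (A : algC -> Prop) : Prop :=
  [/\ A 1, forall a b, A a -> A b -> A (a - b) & forall a b, A a -> A b -> A (a * b)].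

Definition is_prime_ideal (A P : algC -> Prop) : Prop :=
  [/\ is_ideal A P, ~ P 1 & forall a b, A a -> A b -> P (a * b) -> P a \/ P b].

Section Subring.
Variable A : algC -> Prop.
Hypothesis A_subring : is_subring A.

Lemma subring1 : A 1. Proof. by case: A_subring. Qed.
Lemma subringB a b : A a -> A b -> A (a - b). Proof. by case: A_subring => _ + _; apply. Qed.
Lemma subringM a b : A a -> A b -> A (a * b). Proof. by case: A_subring => _ _; apply. Qed.
Lemma subring0 : A 0. Proof. by rewrite -(subrr 1); apply: subringB; apply: subring1. Qed.
Lemma subringN a : A a -> A (- a). Proof. by rewrite -sub0r; apply/subringB/subring0. Qed.
Lemma subringD a b : A a -> A b -> A (a + b).
Proof. by move=> Aa Ab; rewrite -[b]opprK; apply/subringB/subringN. Qed.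
Lemma subringX a k : A a -> A (a ^+ k).
Proof.
move=> Aa; elim: k => [|k IHk]; first by rewrite expr0; apply: subring1.
by rewrite exprS; apply: subringM.
Qed.

End Subring.

Section Ideal.
Variables A I : algC -> Prop.
Hypothesis I_ideal : is_ideal A I.

Lemma ideal_sub a : I a -> A a. Proof. by case: I_ideal => + _ _ _; apply. Qed.
Lemma ideal0 : I 0. Proof. by case: I_ideal. Qed.
Lemma idealB a b : I a -> I b -> I (a - b). Proof. by case: I_ideal => _ _ + _; apply. Qed.
Lemma idealMl r a : A r -> I a -> I (r * a). Proof. by case: I_ideal => _ _ _; apply. Qed.
Lemma idealMr a r : A r -> I a -> I (a * r). Proof. by rewrite mulrC; apply: idealMl. Qed.
Lemma idealN a : I a -> I (- a). Proof. by rewrite -sub0r; apply/idealB/ideal0. Qed.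
Lemma idealD a b : I a -> I b -> I (a + b).
Proof. by move=> Ia Ib; rewrite -[b]opprK; apply/idealB/idealN. Qed.
Lemma idealDl_iff a b : I a -> (I (a + b) <-> I b).
Proof.
move=> Ia; split=> [Iab | Ib]; last exact: idealD.
by rewrite -[b](addKr a); apply: idealD => //; apply: idealN.
Qed.
Lemma ideal_neq0 a : ~ I a -> a != 0.
Proof. by apply: contra_notN => /eqP ->; apply: ideal0. Qed.
Lemma ideal1_full : I 1 -> forall a, A a -> I a.
Proof. by move=> I1 a Aa; rewrite -[a]mulr1; apply: idealMl. Qed.

End Ideal.

Lemma maximal_ideal_prime A P :
  is_subring A -> is_maximal_ideal A P -> is_prime_ideal A P.
Proof.
move=> A_sub [P_ideal [a0 [Aa0 Pa0]] P_max].
have P1 : ~ P 1 by move/(ideal1_full P_ideal)/(_ _ Aa0).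
split=> // a b Aa Ab Pab; apply: NNPP => /not_or_and [Pa Pb].
pose J y := exists pi r, [/\ P pi, A r & y = pi + a * r].
have J_ideal : is_ideal A J.
  split.
  - move=> _ [pi [r [Ppi Ar ->]]].
    exact: (subringD A_sub (ideal_sub P_ideal Ppi) (subringM A_sub Aa Ar)).
  - exists 0, 0; split; [exact: ideal0 P_ideal | exact: subring0 A_sub | ring].
  - move=> _ _ [p1 [r1 [Pp1 Ar1 ->]]] [p2 [r2 [Pp2 Ar2 ->]]].
    exists (p1 - p2), (r1 - r2).
    by split; [exact: (idealB P_ideal Pp1 Pp2) | exact: (subringB A_sub Ar1 Ar2) | ring].
  - move=> s _ As [p1 [r1 [Pp1 Ar1 ->]]].
    exists (s * p1), (s * r1).
    by split; [exact: (idealMl P_ideal As Pp1) | exact: (subringM A_sub As Ar1) | ring].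
have PJ y : P y -> J y by exists y, 0; split; [|exact: subring0 A_sub|ring].
case: (P_max J J_ideal PJ) => [JP | JA].
- apply: Pa; apply/JP; exists 0, 1.
  by split; [exact: ideal0 P_ideal | exact: subring1 A_sub | ring].
- have [pi [r [Ppi Ar e1]]] := proj2 (JA 1) (subring1 A_sub); apply: Pb.
  have -> : b = b * pi + r * (a * b) by rewrite -[b in LHS]mulr1 e1; ring.
  by apply: (idealD P_ideal); apply: (idealMl P_ideal).
Qed.

Section PrimeIdeal.
Variables A P : algC -> Prop.
Hypotheses (A_sub : is_subring A) (P_prime : is_prime_ideal A P).

Let P_ideal : is_ideal A P. Proof. by case: P_prime. Qed.

Lemma prime_ideal_notinM a b : A a -> A b -> ~ P a -> ~ P b -> ~ P (a * b).
Proof. by case: P_prime => _ _ P_mul Aa Ab Pa Pb /(P_mul _ _ Aa Ab) []. Qed.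

Lemma prime_idealX a k : A a -> P (a ^+ k) -> P a.
Proof.
case: P_prime => _ P1 P_mul Aa; elim: k => [|k IHk]; first by rewrite expr0.
by rewrite exprS => /(P_mul _ _ Aa (subringX A_sub k Aa)) [| /IHk].
Qed.

Lemma mem_localization a : A a -> localization A P a.
Proof.
move=> Aa; exists a, 1; rewrite divr1; split=> //; first exact: subring1 A_sub.
by case: P_prime.
Qed.

Lemma localization_subring : is_subring (localization A P).
Proof.
split; first by apply: mem_localization; apply: subring1 A_sub.
all: move=> _ _ [a [b [Aa Ab Pb ->]]] [c [d [Ac Ad Pd ->]]].
all: have Pbd := prime_ideal_notinM Ab Ad Pb Pd.
all: have Abd := subringM A_sub Ab Ad.
- exists (a * d - c * b), (b * d); split=> //.
    exact: (subringB A_sub (subringM A_sub Aa Ad) (subringM A_sub Ac Ab)).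
  by field; rewrite (ideal_neq0 P_ideal Pb) (ideal_neq0 P_ideal Pd).
- by exists (a * c), (b * d); rewrite mulf_div; split=> //; apply: subringM.
Qed.

End PrimeIdeal.

Section Uniformizer.
Variables (S : algC -> Prop) (t : algC).
Hypotheses (S_sub : is_subring S) (St : S t) (t_neq0 : t != 0) (tNinv : ~ S t^-1).
Hypothesis S_factor : forall s, S s -> s != 0 ->
  exists k u, [/\ S u, S u^-1 & s = t ^+ k * u].

Let tS y := exists2 s, S s & y = s * t.

Lemma tS_ideal : is_ideal S tS.
Proof.
split.
- by move=> _ [s Ss ->]; apply: subringM.
- by exists 0; [exact: subring0 S_sub | rewrite mul0r].
- by move=> _ _ [s1 Ss1 ->] [s2 Ss2 ->]; exists (s1 - s2); [apply: subringB | ring].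
- by move=> r _ Sr [s Ss ->]; exists (r * s); [apply: subringM | ring].
Qed.

Lemma tS_neq1 : ~ tS 1.
Proof.
case=> s Ss e1; apply: tNinv; suff -> : t^-1 = s by [].
by apply: (mulIf t_neq0); rewrite mulVf // -e1.
Qed.

Lemma notin_tS_inv s : S s -> ~ tS s -> S s^-1.
Proof.
move=> Ss tSNs; have s_neq0 : s != 0 by apply: (ideal_neq0 tS_ideal).
have [[|k] [u [Su Suinv sE]]] := S_factor Ss s_neq0; first by rewrite sE mul1r.
case: tSNs; exists (t ^+ k * u); last by rewrite sE exprS; ring.
exact: (subringM S_sub (subringX S_sub k St) Su).
Qed.

Lemma ideal_notin_tS_full J y : is_ideal S J -> J y -> ~ tS y -> forall z, S z -> J z.
Proof.
move=> J_ideal Jy tSNy; apply: (ideal1_full J_ideal).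
have y_neq0 : y != 0 by apply: (ideal_neq0 tS_ideal).
rewrite -(mulVf y_neq0); apply: (idealMl J_ideal) => //.
exact: notin_tS_inv (ideal_sub J_ideal Jy) tSNy.
Qed.

Lemma tS_maximal : is_maximal_ideal S tS.
Proof.
split; first exact: tS_ideal.
  by exists 1; split; [apply: subring1 | apply: tS_neq1].
move=> J J_ideal tSJ; case: (classic (exists2 y, J y & ~ tS y)) => [[y Jy tSNy] | tSJc].
  right=> z; split; first exact: (ideal_sub J_ideal).
  exact: (ideal_notin_tS_full J_ideal Jy tSNy).
by left=> z; split=> [Jz | /tSJ //]; apply: NNPP => tSNz; apply: tSJc; exists z.
Qed.

Lemma maximal_ideal_tS M : is_maximal_ideal S M -> forall y, M y <-> tS y.
Proof.
move=> [M_ideal [a [Sa MNa]] M_max].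
have M_tS y : M y -> tS y.
  by move=> My; apply: NNPP => /(ideal_notin_tS_full M_ideal My) /(_ a Sa).
case: (M_max tS tS_ideal M_tS) => [tS_M y | tS_full]; first by split=> /tS_M.
by case: tS_neq1; apply/tS_full; apply: subring1 S_sub.
Qed.

Lemma ideal_principal I : is_ideal S I ->
  exists g, S g /\ (forall y, I y <-> exists s, S s /\ y = s * g).
Proof.
move=> I_ideal.
case: (classic (exists y, I y /\ y != 0)) => [[y0 [Iy0 y0_neq0]] | I0].
  pose Q k := exists u, [/\ u != 0, S u^-1 & I (t ^+ k * u)].
  have Q_factor y : I y -> y != 0 -> exists2 k, Q k & exists2 u, S u & y = t ^+ k * u.
    move=> Iy y_neq0; have [k [u [Su Suinv yE]]] := S_factor (ideal_sub I_ideal Iy) y_neq0.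
    exists k; last by exists u.
    exists u; split=> //; last by rewrite -yE.
    by apply: contraNneq y_neq0 => u0; rewrite yE u0 mulr0.
  have [k Qk _] := Q_factor y0 Iy0 y0_neq0.
  have [k0 [[[u [u_neq0 Suinv Itku]] k0min] _]] :=
    dec_inh_nat_subset_has_unique_least_element Q (fun k => classic (Q k)) (ex_intro Q k Qk).
  have Itk : I (t ^+ k0).
    rewrite -[t ^+ k0]mulr1 -(mulfV u_neq0) mulrA mulrC.
    exact: (idealMl I_ideal Suinv Itku).
  exists (t ^+ k0); split; first exact: (subringX S_sub k0 St).
  move=> z; split=> [Iz | [s [Ss ->]]]; last exact: (idealMl I_ideal Ss Itk).
  have [-> | z_neq0] := eqVneq z 0.
    by exists 0; split; [exact: subring0 S_sub | rewrite mul0r].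
  have [l Ql [v Sv zE]] := Q_factor z Iz z_neq0.
  have /ssrnat.leP le_kl := k0min l Ql.
  exists (t ^+ (l - k0) * v); split.
    exact: (subringM S_sub (subringX S_sub (l - k0) St) Sv).
  by rewrite zE -(subnK le_kl) exprD subnK //; ring.
exists 0; split; first exact: subring0 S_sub.
move=> y; split=> [Iy | [s [_ ->]]]; last by rewrite mulr0; apply: ideal0 I_ideal.
exists 0; split; first exact: subring0 S_sub.
by rewrite mulr0; apply/eqP/(contra_notT _ I0) => y_neq0; exists y.
Qed.

Lemma DVR_of_uniformizer : is_DVR S.
Proof.
split; first exact: ideal_principal.
  by exists tS; split; [exact: tS_maximal | exact: maximal_ideal_tS].
by exists t.
Qed.

End Uniformizer.

Lemma factor_sub_horner (R : comNzRingType) (q : {poly R}) (b : R) :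
  exists h : {poly R}, q - q.[b]%:P = h * ('X - b%:P).
Proof. by apply/factor_theorem; rewrite /root hornerD hornerN hornerC subrr. Qed.

Lemma dvdz_hornerB (q : {poly int}) (a b : int) : (a - b %| q.[a] - q.[b])%Z.
Proof.
have [h /(congr1 (horner^~ a))] := factor_sub_horner q b.
by rewrite hornerD hornerN hornerC hornerM hornerXsubC => ->; apply: dvdz_mull.
Qed.

Lemma size_monic_subXn (R : nzRingType) (q : {poly R}) (n : nat) :
  q \is monic -> size q = n.+1 -> (size (q - 'X^n)%R <= n)%N.
Proof.
move=> /monicP lq sq; apply/leq_sizeP => j; rewrite leq_eqVlt coefB coefXn.
case/predU1P => [<- | ltnj]; first by rewrite eqxx -lq /lead_coef sq subrr.
by rewrite nth_default ?sq // gtn_eqF // subrr.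
Qed.

Lemma monicXnD (R : nzRingType) (n : nat) (q : {poly R}) :
  (size q <= n)%N -> 'X^n + q \is monic /\ size ('X^n + q) = n.+1.
Proof.
move=> sq; have lt_q : (size q < size ('X^n : {poly R}))%N by rewrite size_polyXn.
by rewrite monicE lead_coefDl // size_polyDl // lead_coefXn size_polyXn.
Qed.

Lemma take_poly_dvdz (p : int) (r : {poly int}) (j : nat) :
  (forall i, (i < j)%N -> (p %| r`_i)%Z) ->
  take_poly j r = p%:P * \poly_(i < j) (r`_i %/ p)%Z.
Proof.
move=> dvd_r; apply/polyP => i; rewrite coef_take_poly coefCM coef_poly.
by case: ltnP => [/dvd_r/divzK|_]; rewrite ?mulr0 // mulrC => ->.
Qed.

Definition eisenstein (p : int) (N : nat) (F : {poly int}) : Prop :=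
  exists2 g : {poly int}, F = 'X^N + p%:P * g & (size g <= N)%N /\ ~ (p %| g.[0])%Z.

Lemma eisenstein_monic p N F : eisenstein p N F -> F \is monic /\ size F = N.+1.
Proof.
case=> g -> [sg _]; apply: monicXnD.
by rewrite mul_polyC (leq_trans (size_scale_leq _ _)).
Qed.

Lemma eisenstein_XnsubC (p m : int) (d : nat) :
  (0 < d)%N -> ~ (p %| m)%Z -> eisenstein p d ('X^d - (p * m)%:P).
Proof.
move=> d_gt0 pNm; exists (- m%:P); last first.
  by rewrite size_polyN (leq_trans (size_polyC_leq1 _)) // hornerN hornerC rpredN.
by rewrite polyCM; ring.
Qed.

Lemma eisenstein_comp_XnsubC (p c : int) (d N : nat) (F : {poly int}) :
  p != 0 -> (p %| c)%Z -> (0 < d)%N -> (1 < N)%N -> eisenstein p N F ->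
  eisenstein p (d * N) (F \Po ('X^d - c%:P)).
Proof.
move=> p_neq0 /dvdzP [m ->] d_gt0 N_gt1 eF.
have [[monF sF] [g defF [sg pNg0]]] := (eisenstein_monic eF, eF).
set Q := 'X^d - (m * p)%:P.
have monQ : Q \is monic by rewrite monicXnsubC.
have sQ : size Q = d.+1 by rewrite size_XnsubC.
(* By [subrXX], Q ^+ N - ('X^d) ^+ N is (Q - 'X^d) = - m p times the sum below. *)
pose g' := g \Po Q - m%:P * \sum_(i < N) Q ^+ (N.-1 - i) * ('X^d) ^+ i.
have defFQ : F \Po Q = 'X^(d * N) + p%:P * g'.
  rewrite defF comp_polyD comp_polyM comp_polyC comp_Xn_poly exprM.
  have /eqP := subrXX Q 'X^d N; rewrite subr_eq => /eqP ->.
  by rewrite /g' /Q polyCM; ring.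
exists g' => //; split.
- have monFQ : F \Po Q \is monic.
    by rewrite monicE lead_coef_comp ?sQ // (monicP monF) (monicP monQ) expr1n.
  have sFQ : size (F \Po Q) = (d * N).+1.
    have := size_comp_poly F Q; rewrite sF sQ /= mulnC => <-.
    by rewrite prednK // lt0n size_poly_eq0 monic_neq0.
  have := size_monic_subXn monFQ sFQ.
  by rewrite defFQ addrC addKr mul_polyC size_scale.
- (* p g'(0) = F(-mp) = (-mp)^N + p g(-mp) and p^2 | (mp)^N, so
     g'(0) = g(-mp) = g(0) modulo p. *)
  move=> p_g'0; apply: pNg0.
  have dN_gt0 : (0 < d * N)%N by rewrite muln_gt0 d_gt0 ltnW.
  have := congr1 (horner^~ 0) defFQ; rewrite /= hornerD hornerXn expr0n eqn0Ngt dN_gt0.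
  rewrite add0r hornerM hornerC horner_comp.
  rewrite /Q hornerD hornerN hornerC hornerXn expr0n eqn0Ngt d_gt0 sub0r.
  rewrite defF hornerD hornerM hornerC hornerXn.
  have -> : (- (m * p)) ^+ N = p * (p * (m ^+ 2 * (- (m * p)) ^+ (N - 2))).
    by rewrite -(subnKC N_gt1) exprD subnKC // expr2; ring.
  rewrite -mulrDr => /(mulfI p_neq0) g'0E.
  move: p_g'0; rewrite -g'0E rpredDl ?dvdz_mulr // => dvd_gmp.
  have dvd_g : (p %| g.[- (m * p)] - g.[0])%Z.
    by apply: dvdz_trans (dvdz_hornerB _ _ _); rewrite subr0 rpredN dvdz_mull.
  by rewrite -[g.[0]](subKr g.[- (m * p)]) rpredB.
Qed.

Definition zeval (x : algC) : {poly int} -> algC := horner_eval x \o map_poly intr.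
HB.instance Definition _ (x : algC) := GRing.RMorphism.on (zeval x).

Lemma zevalC x c : zeval x c%:P = c%:~R.
Proof. by rewrite /zeval /= horner_evalE map_polyC hornerC. Qed.

Lemma zevalX x : zeval x 'X = x.
Proof. by rewrite /zeval /= horner_evalE map_polyX hornerX. Qed.

Lemma zeval_comp x q r : zeval x (q \Po r) = zeval (zeval x r) q.
Proof. by rewrite /zeval /= !horner_evalE map_comp_poly horner_comp. Qed.

Lemma Zadj_zeval x q : Zadj x (zeval x q). Proof. by exists q. Qed.

Lemma Zadj_gen x : Zadj x x. Proof. by have := Zadj_zeval x 'X; rewrite zevalX. Qed.

Lemma Zadj_subring x : is_subring (Zadj x).
Proof.
split; first by have := Zadj_zeval x 1; rewrite rmorph1.
  by move=> _ _ [q ->] [r ->]; have := Zadj_zeval x (q - r); rewrite rmorphB.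
by move=> _ _ [q ->] [r ->]; have := Zadj_zeval x (q * r); rewrite rmorphM.
Qed.

Section EisensteinRoot.
Variables (x : algC) (p : int) (N : nat) (g : {poly int}) (P : algC -> Prop).
Hypotheses (p_neq0 : p != 0) (g_size : (size g <= N)%N) (pNg0 : ~ (p %| g.[0])%Z).
Hypothesis root_x : zeval x ('X^N + p%:P * g) = 0.
Hypothesis P_max : is_maximal_ideal (Zadj x) P.
Hypothesis P_int : forall z : int, P z%:~R <-> (p %| z)%Z.

Let A := Zadj x.
Let w := zeval x g.
Let A_sub : is_subring A := Zadj_subring x.
Let P_prime : is_prime_ideal A P := maximal_ideal_prime A_sub P_max.
Let P_ideal : is_ideal A P. Proof. by case: P_prime. Qed.

Lemma eis_degree_gt0 : (0 < N)%N.
Proof.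
rewrite lt0n; apply/eqP => N0; apply: pNg0.
by move: g_size; rewrite N0 leqn0 size_poly_eq0 => /eqP ->; rewrite horner0 dvdz0.
Qed.

Lemma eis_mul_pw : p%:~R * w = - x ^+ N.
Proof.
move: root_x; rewrite rmorphD rmorphM rmorphXn /= zevalX zevalC => /eqP.
by rewrite addrC addr_eq0 => /eqP.
Qed.

Lemma eis_abs_gt1 : (1 < `|p|)%N.
Proof.
rewrite ltn_neqAle absz_gt0 p_neq0 andbT eq_sym; apply/negP => /eqP p1.
by case: P_prime => _ P1 _; apply: P1; apply/(P_int 1); rewrite dvdzE p1.
Qed.

Lemma eis_root_in_P : P x.
Proof.
apply: (prime_idealX A_sub P_prime (Zadj_gen x) (k := N)).
have -> : x ^+ N = - w * p%:~R by rewrite mulNr mulrC eis_mul_pw opprK.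
exact: (idealMl P_ideal (subringN A_sub (Zadj_zeval x g)) (proj2 (P_int p) (dvdzz p))).
Qed.

Lemma eis_P_zeval q : P (zeval x q) <-> (p %| q.[0])%Z.
Proof.
have [h] := factor_sub_horner q 0; rewrite subr0 => /(congr1 (zeval x)).
rewrite rmorphB rmorphM /= zevalC zevalX => /(canRL (subrK _)) ->.
have Phx : P (zeval x h * x) := idealMl P_ideal (Zadj_zeval x h) eis_root_in_P.
exact: iff_trans (idealDl_iff P_ideal _ Phx) (P_int _).
Qed.

Lemma eis_w_notin_P : ~ P w.
Proof. by move/eis_P_zeval. Qed.

Lemma eis_root_neq0 : x != 0.
Proof.
apply/eqP => x0; have := eis_mul_pw; rewrite x0 expr0n eqn0Ngt eis_degree_gt0 /= oppr0.
move/eqP; rewrite mulf_eq0 intr_eq0 (negbTE p_neq0) /= => /eqP w0.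
by apply: eis_w_notin_P; rewrite w0; apply: ideal0 P_ideal.
Qed.

Lemma eis_zeval_lowest_coef (r : {poly int}) (j : nat) : (j < N)%N ->
  (forall i, (i < j)%N -> (p %| r`_i)%Z) -> ~~ (p %| r`_j)%Z ->
  exists2 a, A a /\ ~ P a & w * zeval x r = x ^+ j * a.
Proof.
move=> lt_jN dvd_low pNrj.
set C := \poly_(i < j) (r`_i %/ p)%Z; set D := drop_poly j r.
have r_split : r = p%:P * C + D * 'X^j by rewrite -take_poly_dvdz ?poly_take_drop.
have PD : ~ P (zeval x D).
  by rewrite eis_P_zeval horner_coef0 coef_drop_poly add0n; apply/negP.
have AD := Zadj_zeval x D; have AC := Zadj_zeval x C; have Aw := Zadj_zeval x g.
have AxNj := subringX A_sub (N - j) (Zadj_gen x).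
exists (w * zeval x D - x ^+ (N - j) * zeval x C); first split.
- exact: (subringB A_sub (subringM A_sub Aw AD) (subringM A_sub AxNj AC)).
- move=> Pa; apply: (prime_ideal_notinM P_prime Aw AD eis_w_notin_P PD).
  rewrite -(subrK (x ^+ (N - j) * zeval x C) (w * zeval x D)).
  apply: (idealD P_ideal Pa); apply: (idealMr P_ideal AC).
  rewrite -subnSK // exprS; apply: (idealMr P_ideal (subringX A_sub _ (Zadj_gen x))).
  exact: eis_root_in_P.
rewrite {1}r_split rmorphD !rmorphM rmorphXn /= zevalC zevalX.
have xNj : x ^+ N = x ^+ j * x ^+ (N - j) by rewrite -exprD subnKC // ltnW.
transitivity (p%:~R * w * zeval x C + w * zeval x D * x ^+ j); first by ring.
by rewrite eis_mul_pw xNj; ring.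
Qed.

(* Induction on [`|lead_coef r|]: either some coefficient of [r] (all of which sit
   below [N]) is not divisible by [p], or [r = p r'] and [p] is [x ^+ N] times a unit. *)
Lemma eis_zeval_factor (r : {poly int}) : r != 0 -> (size r <= N)%N ->
  exists k a b, [/\ A a, A b, ~ P a, ~ P b & b * zeval x r = x ^+ k * a].
Proof.
have [M] := ubnP `|lead_coef r|; elim: M r => // M IHM r lt_r r_neq0 r_size.
case: (boolP [exists i : 'I_(size r), ~~ (p %| r`_i)%Z]) => [/existsP [i0 pNri0] | ].
  have [j pNrj j_min] := ex_minnP (ex_intro (fun j => ~~ (p %| r`_j)%Z) (val i0) pNri0).
  have lt_jN : (j < N)%N.
    apply: leq_trans r_size; rewrite ltnNge; apply: contra pNrj => le_rj.
    by rewrite nth_default ?dvdz0.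
  have dvd_low i : (i < j)%N -> (p %| r`_i)%Z.
    by move=> lt_ij; apply: contraTT lt_ij => /j_min; rewrite -leqNgt.
  have [a [Aa Pa] e] := eis_zeval_lowest_coef lt_jN dvd_low pNrj.
  by exists j, a, w; split=> //; [exact: Zadj_zeval | exact: eis_w_notin_P].
rewrite negb_exists => /forallP /= r_dvd.
set r' := \poly_(i < size r) (r`_i %/ p)%Z.
have r_eq : r = p%:P * r'.
  rewrite -take_poly_dvdz ?take_poly_id // => i lt_ir.
  by have := r_dvd (Ordinal lt_ir); rewrite negbK.
have r'_neq0 : r' != 0 by apply: contraNneq r_neq0 => r'0; rewrite r_eq r'0 mulr0.
have [|||k [a [b [Aa Ab Pa Pb e]]]] := IHM r'.
- rewrite -ltnS (leq_trans _ lt_r) // ltnS r_eq lead_coefM lead_coefC abszM.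
  by rewrite ltn_Pmull ?eis_abs_gt1 // absz_gt0 lead_coef_eq0.
- exact: r'_neq0.
- by rewrite (leq_trans (size_poly _ _)).
exists (N + k)%N, (- a), (w * b); split.
- exact: (subringN A_sub Aa).
- exact: (subringM A_sub (Zadj_zeval x g) Ab).
- by move/(idealN P_ideal); rewrite opprK.
- exact: (prime_ideal_notinM P_prime (Zadj_zeval x g) Ab eis_w_notin_P Pb).
- rewrite r_eq rmorphM /= zevalC.
  transitivity (p%:~R * w * (b * zeval x r')); first by ring.
  by rewrite eis_mul_pw e exprD; ring.
Qed.

Lemma eis_localization_factor s : localization A P s -> s != 0 ->
  exists k u, [/\ localization A P u, localization A P u^-1 & s = x ^+ k * u].
Proof.
case=> _ [b0 [[q ->] Ab0 Pb0 ->]] s_neq0; rewrite -[_.[x]]/(zeval x q) in s_neq0 *.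
have [monF sF] : 'X^N + p%:P * g \is monic /\ size ('X^N + p%:P * g) = N.+1.
  by apply: monicXnD; rewrite mul_polyC (leq_trans (size_scale_leq _ _)).
set r := q %% ('X^N + p%:P * g).
have zq : zeval x q = zeval x r.
  by rewrite {1}(Pdiv.IdomainMonic.divp_eq monF q) rmorphD rmorphM /= root_x mulr0 add0r.
have r_neq0 : r != 0 by apply: contraNneq s_neq0 => r0; rewrite zq r0 rmorph0 mul0r.
have r_size : (size r <= N)%N by rewrite -ltnS -sF ltn_modpN0 ?monic_neq0.
have [k [a [b [Aa Ab Pa Pb e]]]] := eis_zeval_factor r_neq0 r_size.
have Pbb0 := prime_ideal_notinM P_prime Ab Ab0 Pb Pb0.
have Abb0 := subringM A_sub Ab Ab0.
exists k, (a / (b * b0)); split.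
- by exists a, (b * b0).
- by exists (b * b0), a; rewrite invf_div.
- rewrite zq mulrA -e; field.
  by rewrite (ideal_neq0 P_ideal Pb) (ideal_neq0 P_ideal Pb0).
Qed.

Lemma eis_root_inv_notin : ~ localization A P x^-1.
Proof.
case=> a [b [Aa Ab Pb xinv]]; have b_neq0 := ideal_neq0 P_ideal Pb; apply: Pb.
have -> : b = a * x.
  by rewrite -(divfK b_neq0 a) -xinv mulrAC mulVf ?mul1r // eis_root_neq0.
exact: (idealMl P_ideal Aa eis_root_in_P).
Qed.

Lemma eis_localization_DVR : is_DVR (localization A P).
Proof.
apply: (DVR_of_uniformizer (localization_subring A_sub P_prime)
  (mem_localization A_sub P_prime (Zadj_gen x)) eis_root_neq0 eis_root_inv_notin).
exact: eis_localization_factor.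
Qed.

End EisensteinRoot.

Fixpoint xpoly (nu : nat) (n : nat) : {poly int} :=
  if n is n'.+1 then xpoly nu n' \Po ('X^2 - (nu%:Z)%:P) else 'X.

Lemma xpoly_root nu n : zeval (xseq nu n) (xpoly nu n) = 0.
Proof.
elim: n => [|n IHn] /=; first by rewrite zevalX.
rewrite zeval_comp rmorphB rmorphXn /= zevalX zevalC sqrtCK.
by rewrite -pmulrn addrC addKr.
Qed.

Lemma xpoly_eisenstein (nu : nat) (p m : int) (n : nat) :
  p != 0 -> nu%:Z = p * m -> ~ (p %| m)%Z -> eisenstein p (2 ^ n.+1) (xpoly nu n.+1).
Proof.
move=> p_neq0 nuE pNm; elim: n => [|n IHn].
  by rewrite /= comp_polyX nuE; apply: eisenstein_XnsubC.
rewrite expnS; apply: eisenstein_comp_XnsubC => //.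
  by rewrite nuE dvdz_mulr.
by rewrite -[1%N]/(2 ^ 0)%N ltn_exp2l.
Qed.

Theorem lemma4p3 (nu : nat) (n p : nat) (P : algC -> Prop) :
  (3 <= nu)%N -> squarefree nu -> (nu %% 4 = 2 \/ nu %% 4 = 3)%N ->
  (1 <= n)%N -> prime p -> (p %| nu)%N ->
  is_maximal_ideal (Zadj (xseq nu n)) P ->
  (forall z : int, P z%:~R <-> (p%:Z %| z)%Z) ->
  is_DVR (localization (Zadj (xseq nu n)) P).
Proof.
move=> _ nu_sqf _ n_gt0 p_prime p_dvd_nu P_max P_int.
have p_neq0 : p%:Z != 0 by rewrite eqz_nat -lt0n prime_gt0.
have nuE : nu%:Z = p%:Z * (nu %/ p)%N%:Z by rewrite -PoszM mulnC divnK.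
have pNm : ~ (p%:Z %| (nu %/ p)%N%:Z)%Z.
  move=> p_dvd_m; apply: (nu_sqf p p_prime).
  by rewrite -(divnK p_dvd_nu) dvdn_pmul2r ?prime_gt0.
case: n n_gt0 P_max P_int => // n _ P_max P_int.
have [g xpolyE [g_size pNg0]] := xpoly_eisenstein n p_neq0 nuE pNm.
apply: (eis_localization_DVR p_neq0 g_size pNg0 _ P_max P_int).
by rewrite -xpolyE xpoly_root.
Qed.
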